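(* Let $n \ge 2$ and $\Sigma = \{1, 2, \dots, n\}$. Define the word $w \in \Sigma^{2n}$ by $w[1]w[2]w[3] = 1\,2\,1$; for each $x \in \{2, 3, \dots, n-1\}$, $w[2x] = x+1$ and $w[2x+1] = x$; and $w[2n] = n$. Then $TG(w)$ is a temporal path graph, i.e. its underlying graph is a path on the $n$ vertices $v_1, \dots, v_n$.
   Context: $w[i]$ denotes the $i$-th letter of $w$, $w[i,j]$ the factor $w[i]\cdots w[j]$, $\mathrm{letters}(u)$ the set of symbols of $u$, and $\pi_{\mathcal S}(w)$ the subsequence of $w$ of all occurrences of symbols in $\mathcal S$. Symbols $x,y$ alternate in $w$ if $\pi_{\{x,y\}}(w) \in \{(xy)^k, (xy)^kx, (yx)^k, (yx)^ky : k \ge 0\}$. $G(w)$ has vertex set $\{v_1,\dots,v_n\}$ and undirected edge $(v_x,v_y)$ iff $x\neq y$ alternate in $w$. Start points: $S_1=1$, and $S_i$ is the least index $j>S_{i-1}$ with $w[j] \in \mathrm{letters}(w[S_{i-1},j-1])$; $S_1<\dots<S_T$ are all start points. The $t$-th timestep factor is $w[S_t,S_{t+1}-1]$ ($t<T$) or $w[S_T,|w|]$ ($t=T$). $TG(w)=(V,E_1,\dots,E_T)$ with $E_t$ the set of edges $(v_x,v_y)$ of $G(w)$ with $x$ or $y$ occurring in the $t$-th timestep factor; its underlying graph is $(V,\bigcup_t E_t)$. *)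

(* Words are [seq nat]; positions in the paper are 1-based,
   so the paper's w[i] is [nth 0 w i.-1]. Letters/vertices are nats 1..n
   (vertex v_x is identified with the letter x). *)
From mathcomp Require Import all_boot all_order all_fingroup.
Set Implicit Arguments. Unset Strict Implicit. Unset Printing Implicit Defensive.

Definition proj2 (w : seq nat) (x y : nat) : seq nat :=
  filter (fun c => (c == x) || (c == y)) w.

Definition alternate (w : seq nat) (x y : nat) : Prop :=
  exists k : nat,
    proj2 w x y = flatten (nseq k [:: x; y]) \/
    proj2 w x y = flatten (nseq k [:: x; y]) ++ [:: x] \/
    proj2 w x y = flatten (nseq k [:: y; x]) \/
    proj2 w x y = flatten (nseq k [:: y; x]) ++ [:: y].

Definition Gedge (w : seq nat) (x y : nat) : Prop := x <> y /\ alternate w x y.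

(* letters(w[a..b]) with 0-based a, half-open end *)
Definition factor (w : seq nat) (a b : nat) : seq nat := take (b - a) (drop a w).

(* 0-based: the least j > s (j < |w|) with w[j] in letters(w[s..j-1]) *)
Definition next_start (w : seq nat) (s : nat) : option nat :=
  let c := find (fun j => nth 0 w j \in factor w s j) (iota s.+1 (size w - s.+1)) in
  if c < size w - s.+1 then Some (s.+1 + c) else None.

Fixpoint starts_from (w : seq nat) (fuel s : nat) : seq nat :=
  s :: match fuel with
       | 0 => [::]
       | f.+1 => match next_start w s with
                 | Some s' => starts_from w f s'
                 | None => [::]
                 end
       end.

(* all start points S_1 < ... < S_T (0-based); fuel |w| suffices since they increase *)
Definition starts (w : seq nat) : seq nat := starts_from w (size w) 0.

Definition timesteps (w : seq nat) : seq (seq nat) :=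
  let ss := starts w in
  [seq factor w p.1 p.2 | p <- zip ss (rcons (behead ss) (size w))].

Definition TGedge (w : seq nat) (t x y : nat) : Prop :=
  Gedge w x y /\ ((x \in nth [::] (timesteps w) t) \/ (y \in nth [::] (timesteps w) t)).

Definition underlying_edge (w : seq nat) (x y : nat) : Prop :=
  exists t, t < size (timesteps w) /\ TGedge w t x y.

(* the underlying graph of TG(w), on vertices v_1..v_n, is a path:
   some ordering p of the vertices makes the edges exactly the consecutive pairs. *)
Definition underlying_is_path (n : nat) (w : seq nat) : Prop :=
  exists p : {perm 'I_n}, forall i j : 'I_n,
    underlying_edge w i.+1 j.+1 <-> ((p i).+1 = p j \/ (p j).+1 = p i).

From mathcomp Require Import all_boot all_order all_fingroup.
From mathcomp Require Import zify.
Set Implicit Arguments. Unset Strict Implicit. Unset Printing Implicit Defensive.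

(* Every letter x of w occurs exactly twice, and the occurrences of x and x+1
   interleave as x (x+1) x (x+1), whereas for y > x+1 they form x x y y.  Hence
   G(w) is the path 1 - 2 - ... - n.  The timestep factors concatenate to w, so
   every letter lies in some factor: each edge of G(w) belongs to some E_t, and
   the underlying graph of TG(w) is G(w) itself. *)

Lemma flatten_factors w s ss :
    path leq s ss -> all (leq^~ (size w)) (s :: ss) ->
  flatten [seq factor w p.1 p.2 | p <- zip (s :: ss) (rcons ss (size w))] = drop s w.
Proof.
elim: ss s => [|s' ss IH] s /=.
  by rewrite cats0 /factor take_oversize // size_drop.
move=> /andP[le_ss' path_ss] /andP[_ le_w].
rewrite IH // /factor -[RHS](cat_take_drop (s' - s)) drop_drop subnK //.
Qed.

Lemma starts_fromE w f s : starts_from w f s = s :: behead (starts_from w f s).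
Proof. by case: f. Qed.

Lemma next_start_gt w s s' : next_start w s = Some s' -> s < s' < size w.
Proof. rewrite /next_start; set c := find _ _; case: ifP => // lt_c [<-]; lia. Qed.

Lemma path_starts_from w f s : path ltn s (behead (starts_from w f s)).
Proof.
elim: f s => [|f IH] s //=.
case E: (next_start w s) => [s'|] //.
have /andP[lt_ss' _] := next_start_gt E.
by rewrite starts_fromE /= lt_ss' IH.
Qed.

Lemma starts_from_le_size w f s : s <= size w -> all (leq^~ (size w)) (starts_from w f s).
Proof.
elim: f s => [|f IH] s le_s /=; first by rewrite le_s.
rewrite le_s; case E: (next_start w s) => [s'|] //.
by have /andP[_ /ltnW le_s'] := next_start_gt E; apply: IH.
Qed.

Lemma flatten_timesteps w : flatten (timesteps w) = w.
Proof.
rewrite /timesteps /starts starts_fromE flatten_factors ?drop0 //.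
  by apply: sub_path (path_starts_from _ _ _) => a b /ltnW.
by rewrite -(starts_fromE w (size w) 0) starts_from_le_size.
Qed.

Lemma mem_timesteps w x :
  reflect (exists2 t, t < size (timesteps w) & x \in nth [::] (timesteps w) t) (x \in w).
Proof.
apply: (iffP idP).
  rewrite -{1}(flatten_timesteps w) => /flattenP[u /(nthP [::])[t lt_t <-] x_u].
  by exists t.
case=> t lt_t x_t; rewrite -(flatten_timesteps w); apply/flattenP.
by exists (nth [::] (timesteps w) t) => //; apply: mem_nth.
Qed.

Lemma underlying_edgeE w x y :
  underlying_edge w x y <-> Gedge w x y /\ (x \in w \/ y \in w).
Proof.
split=> [[t [lt_t [Gxy xy_t]]] | [Gxy [/mem_timesteps[t lt_t x_t]
                                    | /mem_timesteps[t lt_t y_t]]]].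
- by split=> //; case: xy_t => z_t; [left | right]; apply/mem_timesteps; exists t.
- by exists t; do !split => //; left.
- by exists t; do !split => //; right.
Qed.

Lemma alternateC w x y : alternate w x y <-> alternate w y x.
Proof.
have proj2C u v : proj2 w u v = proj2 w v u by apply: eq_filter => c; rewrite orbC.
by rewrite /alternate proj2C; split=> -[k Ek]; exists k; tauto.
Qed.

Lemma GedgeC w x y : Gedge w x y <-> Gedge w y x.
Proof. by rewrite /Gedge alternateC; split=> -[ne_xy alt]; split=> // eq_xy; apply: ne_xy. Qed.

Lemma alternate_interleaved w x y : proj2 w x y = [:: x; y; x; y] -> alternate w x y.
Proof. by move=> Exy; exists 2; left. Qed.

Lemma not_alternate_blocks w x y :
  x != y -> proj2 w x y = [:: x; x; y; y] -> ~ alternate w x y.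
Proof.
move=> neq_xy Exy [k]; rewrite Exy.
by case: k => [|[|[|k]]] /= [|[|[|]]] // [] *; subst; rewrite eqxx in neq_xy.
Qed.

Lemma filter_eq_map_nth (T : Type) (x0 : T) (P : pred T) (s : seq T) (idx : seq nat) :
    sorted ltn idx -> (forall i, (i \in idx) = (i < size s) && P (nth x0 s i)) ->
  filter P s = map (nth x0 s) idx.
Proof.
move=> sorted_idx mem_idx; rewrite -{1}(mkseq_nth x0 s) /mkseq filter_map.
congr map; apply: (irr_sorted_eq ltn_trans ltnn) => //.
  by apply: sorted_filter; [exact: ltn_trans | exact: iota_ltn_sorted].
by move=> i; rewrite mem_idx mem_filter mem_iota andbC.
Qed.

Section PathWord.

Variables (n : nat) (w : seq nat).
Hypotheses (n_ge2 : 2 <= n) (size_w : size w = 2 * n).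
Hypotheses (w0 : nth 0 w 0 = 1) (w1 : nth 0 w 1 = 2) (w2 : nth 0 w 2 = 1).
Hypothesis w_mid : forall x, 2 <= x <= n - 1 ->
  nth 0 w (2 * x).-1 = x.+1 /\ nth 0 w (2 * x + 1).-1 = x.
Hypothesis w_last : nth 0 w (2 * n).-1 = n.

Lemma nth_w_even k : k < n -> nth 0 w (2 * k) = maxn k 1.
Proof.
case: k => [|[|k]] lt_kn; rewrite ?w0 ?w2 //.
have [_ w_k] := w_mid (x := k.+2) ltac:(lia).
by rewrite (_ : 2 * k.+2 = (2 * k.+2 + 1).-1) ?w_k; lia.
Qed.

Lemma nth_w_odd k : k < n -> nth 0 w (2 * k).+1 = minn k.+2 n.
Proof.
move=> lt_kn; have [->|ne_k] := eqVneq k n.-1.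
  by rewrite (_ : (2 * n.-1).+1 = (2 * n).-1) ?w_last; lia.
case: k lt_kn ne_k => [|k] lt_kn ne_k; first by rewrite w1; lia.
have [w_k _] := w_mid (x := k.+2) ltac:(lia).
by rewrite (_ : (2 * k.+1).+1 = (2 * k.+2).-1) ?w_k; lia.
Qed.

(* The 0-based positions of the two occurrences of x: 2x - 3 (truncated to 0 for
   x = 1) and 2x (cut down to the last position 2n - 1 for x = n). *)
Definition first_pos x := 2 * x - 3.
Definition second_pos x := minn (2 * x) (2 * n).-1.

Lemma nth_w_eq i x : i < 2 * n -> 1 <= x <= n ->
  (nth 0 w i == x) = (i == first_pos x) || (i == second_pos x).
Proof.
move=> lt_i x_range; rewrite /first_pos /second_pos.
have [k /orP[]/eqP def_i] : exists k, (i == 2 * k) || (i == (2 * k).+1).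
  by exists (i %/ 2); lia.
- by rewrite def_i nth_w_even; lia.
- by rewrite def_i nth_w_odd; lia.
Qed.

Lemma nth_w_first_pos x : 1 <= x <= n -> nth 0 w (first_pos x) = x.
Proof. by move=> x_range; apply/eqP; rewrite nth_w_eq ?eqxx // /first_pos; lia. Qed.

Lemma nth_w_second_pos x : 1 <= x <= n -> nth 0 w (second_pos x) = x.
Proof. by move=> x_range; apply/eqP; rewrite nth_w_eq ?eqxx ?orbT // /second_pos; lia. Qed.

Lemma proj2_w_positions x y idx : 1 <= x <= n -> 1 <= y <= n -> sorted ltn idx ->
    (forall i, (i \in idx) = [|| i == first_pos x, i == second_pos x,
                                 i == first_pos y | i == second_pos y]) ->
  proj2 w x y = map (nth 0 w) idx.
Proof.
move=> x_range y_range sorted_idx mem_idx; apply: filter_eq_map_nth => // i.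
rewrite mem_idx size_w; case: (ltnP i (2 * n)) => [lt_i | le_i] /=.
  by rewrite !nth_w_eq // !orbA.
by rewrite /first_pos /second_pos; lia.
Qed.

Lemma proj2_w_succ x : 1 <= x < n -> proj2 w x x.+1 = [:: x; x.+1; x; x.+1].
Proof.
move=> x_range; rewrite (@proj2_w_positions _ _
  [:: first_pos x; first_pos x.+1; second_pos x; second_pos x.+1]); try lia.
- by rewrite /= !nth_w_first_pos ?nth_w_second_pos //; lia.
- by rewrite /= /first_pos /second_pos; lia.
- by move=> i; rewrite !inE /first_pos /second_pos; lia.
Qed.

Lemma proj2_w_far x y : 1 <= x -> x.+1 < y <= n -> proj2 w x y = [:: x; x; y; y].
Proof.
move=> x_ge1 y_range; rewrite (@proj2_w_positions _ _
  [:: first_pos x; second_pos x; first_pos y; second_pos y]); try lia.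
- by rewrite /= !nth_w_first_pos ?nth_w_second_pos //; lia.
- by rewrite /= /first_pos /second_pos; lia.
- by move=> i; rewrite !inE orbA.
Qed.

Lemma Gedge_w x y : 1 <= x <= n -> 1 <= y <= n ->
  Gedge w x y <-> x.+1 = y \/ y.+1 = x.
Proof.
wlog lt_xy : x y / x < y => [hwlog x_range y_range | x_range y_range].
  case: (ltngtP x y) => [lt_xy | lt_yx | <-]; first exact: hwlog.
    by rewrite GedgeC hwlog //; tauto.
  by split=> [[]|] //; lia.
have [-> | ne_y] := eqVneq y x.+1.
  split=> _; first by left.
  by split; [lia | apply/alternate_interleaved/proj2_w_succ; lia].
split=> [[_] | ]; last lia.
by move/not_alternate_blocks; case; [lia | apply: proj2_w_far; lia].
Qed.

Lemma mem_w x : 1 <= x <= n -> x \in w.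
Proof.
move=> x_range; apply/(nthP 0); exists (first_pos x); last exact: nth_w_first_pos.
by rewrite size_w /first_pos; lia.
Qed.

End PathWord.

Theorem lemma13 (n : nat) (w : seq nat) :
  2 <= n ->
  size w = 2 * n ->
  nth 0 w 0 = 1 -> nth 0 w 1 = 2 -> nth 0 w 2 = 1 ->
  (forall x, 2 <= x <= n - 1 ->
     nth 0 w (2 * x).-1 = x.+1 /\ nth 0 w (2 * x + 1).-1 = x) ->
  nth 0 w (2 * n).-1 = n ->
  underlying_is_path n w.
Proof.
move=> n_ge2 size_w w0 w1 w2 w_mid w_last.
have Gedge_w := Gedge_w n_ge2 size_w w0 w1 w2 w_mid w_last.
have mem_w := mem_w n_ge2 size_w w0 w1 w2 w_mid w_last.
exists 1%g => i j; rewrite !perm1 underlying_edgeE Gedge_w ?ltn_ord //.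
have i_in_w : i.+1 \in w by rewrite mem_w ?ltn_ord.
by split=> [[adj_ij _] | adj_ij]; [lia | split; [lia | left]].
Qed.
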